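(* Let $M=\frac{1}{3^{2/3}-2}$. Let the open intervals $J_n^k\subset[0,M]$ ($n\ge 1$, $1\le k\le 2^{n-1}$) be constructed as follows: $J_1^1$ is the open interval of length $3^{-2/3}$ centered at the midpoint of $[0,M]$; for $n\ge 2$, the intervals $J_n^1,\dots,J_n^{2^{n-1}}$ are the open intervals of length $(3^{2/3})^{-n}$ centered at the midpoints of the $2^{n-1}$ connected components of $[0,M]\setminus(J_1\cup\dots\cup J_{n-1})$, where $J_m=\bigcup_{k=1}^{2^{m-1}}J_m^k$. Let $A=[0,M]\setminus\bigcup_{n\ge1}J_n$. Define $g:[0,M]\to\mathbb{R}$ by $g=0$ on $A$ and $g(x)=\frac{4}{\mathcal{L}(J_n^k)^{1/2}}\mathrm{dist}(x,\partial J_n^k)$ for $x\in J_n^k$, define $f(x)=\int_0^x g(t)\,dt$ for $x\in[0,M]$, and define $F:[0,M]^2\to[0,2]$ by $F(x,y)=f(x)+f(y)$. Then $F$ is a $C^{1,\frac12}$ function (i.e. $C^1$ with $\tfrac12$-Hölder continuous derivatives) and every $t\in[0,2]$ is a critical value of $F$, i.e. there exists $(x,y)\in[0,M]^2$ with $F(x,y)=t$ and $\nabla F(x,y)=(0,0)$.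
   Context: $\mathcal{L}$ denotes Lebesgue measure (length); $\partial J$ is the set of endpoints of an interval $J$. *)

From HB Require Import structures.
From mathcomp Require Import all_boot all_order all_algebra.
From mathcomp Require Import all_classical all_reals all_analysis.
Set Implicit Arguments. Unset Strict Implicit. Unset Printing Implicit Defensive.
Import Order.TTheory GRing.Theory Num.Theory.
Import numFieldNormedType.Exports.
Local Open Scope classical_set_scope.
Local Open Scope ring_scope.

Section CantorConstruction.
Variable R : realType.

Definition q3 : R := 3 `^ (2 / 3).

Definition Mc : R := (q3 - 2)^-1.

Definition Jlen (n : nat) : R := q3 ^- n.

Definition gap (n : nat) (ab : R * R) : R * R :=
  ((ab.1 + ab.2) / 2 - Jlen n / 2, (ab.1 + ab.2) / 2 + Jlen n / 2).

Definition split_comp (n : nat) (ab : R * R) : seq (R * R) :=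
  [:: (ab.1, (gap n ab).1); ((gap n ab).2, ab.2)].

(* comps m = the list of the 2^m connected components (closed intervals,
   as endpoint pairs) of [0,M] \ (J_1 u ... u J_m). *)
Fixpoint comps (m : nat) : seq (R * R) :=
  match m with
  | 0 => [:: (0, Mc)]
  | m'.+1 => flatten [seq split_comp m'.+1 ab | ab <- comps m']
  end.

(* gaps n (n >= 1) = the list [J_n^1; ...; J_n^(2^(n-1))] (endpoint pairs
   of open intervals): J_n^k is centred at the midpoint of the k-th
   component of [0,M] \ (J_1 u ... u J_(n-1)). *)
Definition gaps (n : nat) : seq (R * R) := [seq gap n ab | ab <- comps n.-1].

Definition Jset (n : nat) : set R :=
  [set x | exists2 J, J \in gaps n & J.1 < x < J.2].

Definition Aset : set R :=
  `[0, Mc] `\` [set x | exists2 n : nat, (1 <= n)%N & Jset n x].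

Definition gfun (x : R) : R :=
  if pselect (Aset x) then 0 else
  xget 0 [set v | exists n : nat, exists2 J, ((1 <= n)%N && (J \in gaps n)) &
             (J.1 < x < J.2) /\
             v = 4 / Num.sqrt (J.2 - J.1) * Num.min (x - J.1) (J.2 - x)].

Definition ffun (x : R) : R := \int[lebesgue_measure]_(t in `[0, x]) gfun t.

Definition FF (p : R * R) : R := ffun p.1 + ffun p.2.

Definition square : set (R * R) :=
  [set p | (0 <= p.1 <= Mc) /\ (0 <= p.2 <= Mc)].

End CantorConstruction.

(* C^{1,1/2} on a set S: differentiable at each point of S, with partial
   derivatives (hence gradient) 1/2-Hoelder continuous on S (which implies
   continuity of the derivatives, i.e. C^1). *)
Definition C1half (R : realType) (S : set (R * R)) (G : R * R -> R) : Prop :=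
  (forall p, S p -> differentiable G p) /\
  exists C : R, forall p q, S p -> S q ->
    forall v : R * R, v = (1, 0) \/ v = (0, 1) ->
      `|'D_v G p - 'D_v G q| <= C * (`|p - q| `^ (1 / 2)).

(* On each gap J of length L, g is a tent of slope 4 L^(-1/2) and height
   2 L^(1/2); it vanishes on the Cantor set A.  A tent is 1/2-Hoelder with
   constant 4 whatever its width, and outside its gap its value at x is at most
   4 dist(x, y)^(1/2) for every y off the gap, so g = f' is 1/2-Hoelder and F is
   C^{1,1/2}.
   The tent over a gap of level n has area L^(3/2) = 3^-n.  The increment of f
   across a component of level m differs from 3^-m by an error which is the sum
   of the errors of its two children; the trivial bound at depth k is
   O((2 / 3^(2/3))^k), so f rises by exactly 3^-m across every level-m
   component, like the Cantor function.  Given t in [0, 2] one then chooses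
   nested pairs (I, J) of level-m components with
   f I.1 + f J.1 <= t <= f I.1 + f J.1 + 2 3^-m; they shrink to points x, y of
   A, where g vanishes, and F (x, y) = t. *)

From HB Require Import structures.
From mathcomp Require Import all_boot all_order all_algebra.
From mathcomp Require Import all_classical all_reals all_analysis.
From mathcomp Require Import ring lra.
Import Order.TTheory GRing.Theory Num.Theory.
Import numFieldNormedType.Exports.
Local Open Scope classical_set_scope.
Local Open Scope ring_scope.

Lemma dist_min_lipschitz {R : realDomainType} (a b x y : R) :
  `|Num.min (x - a) (b - x) - Num.min (y - a) (b - y)| <= `|x - y|.
Proof.
have := ler_norm (x - y); have := ler_norm (y - x); rewrite distrC.
by rewrite ler_norml /Num.min; case: ifP; case: ifP => *; apply/andP; split; lra.
Qed.

Lemma ler_div_sqrt {R : rcfType} {e L : R} :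
  0 <= e -> e <= L -> 0 < L -> e / Num.sqrt L <= Num.sqrt e.
Proof.
move=> e_ge0 eL L_gt0.
have sqrtL_gt0 : 0 < Num.sqrt L by rewrite sqrtr_gt0.
have sqrt_le : Num.sqrt e <= Num.sqrt L by rewrite ler_sqrt //; lra.
rewrite ler_pdivrMr // -[leLHS](sqr_sqrtr e_ge0) expr2.
by have := sqrtr_ge0 e; nra.
Qed.

Lemma sqrtrX {R : rcfType} (x : R) n : 0 <= x -> Num.sqrt (x ^+ n) = Num.sqrt x ^+ n.
Proof.
move=> x0; elim: n => [|n IH]; first by rewrite !expr0 sqrtr1.
by rewrite !exprS sqrtrM // IH.
Qed.

Lemma same_derive_same_incr {R : realType} (h1 h2 dh : R -> R) (a b : R) : a <= b ->
  (forall x, x \in `]a, b[ -> is_derive x 1 h1 (dh x)) ->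
  (forall x, x \in `]a, b[ -> is_derive x 1 h2 (dh x)) ->
  continuous h1 -> continuous h2 -> h1 b - h1 a = h2 b - h2 a.
Proof.
move=> ab dh1 dh2 h1_cont h2_cont.
have [||c _] := @MVT_segment R (h1 - h2) (fun x => dh x - dh x) a b ab.
- by move=> x xab; apply: is_deriveB; [exact: dh1 | exact: dh2].
- by apply: continuous_subspaceT => x; apply: continuousB; [exact: h1_cont | exact: h2_cont].
by rewrite subrr mul0r !fctE => /eqP; rewrite subr_eq0 => /eqP; lra.
Qed.

Lemma is_derive_scaled_square {R : realType} (k c x : R) :
  is_derive x 1 (fun y : R => k * (y - c) ^+ 2) (k * (2 * (x - c))).
Proof.
have Dsub : is_derive x 1 (fun y : R => y - c) 1.
  by have := is_deriveB (is_derive_id x 1) (is_derive_cst c x 1); rewrite subr0.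
apply: is_derive_eq (is_deriveZ k (is_deriveX 2 Dsub)) _.
by rewrite /GRing.scale /= expr1; ring.
Qed.

Lemma eq0_norm_le_geometric {R : realType} (e C r : R) : 0 <= r < 1 ->
  (forall k, `|e| <= C * r ^+ k) -> e = 0.
Proof.
move=> /andP[r_ge0 r_lt1] e_le.
have Cr_cvg : (fun k => C * r ^+ k) @ \oo --> C * 0.
  by apply: cvgM; [exact: cvg_cst | apply: cvg_expr; rewrite ger0_norm].
have e_le_near : \forall k \near \oo, `|e| <= C * r ^+ k by apply: nearW.
have := limr_ge (cvgP _ Cr_cvg) e_le_near.
rewrite (cvg_lim _ Cr_cvg) // mulr0 => e_le0.
by apply/normr0_eq0/eqP; rewrite eq_le e_le0 normr_ge0.
Qed.

Lemma nested_segments_meet {R : realType} (lo hi : nat -> R) :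
  (forall m, lo m <= hi m) -> nondecreasing_seq lo -> nonincreasing_seq hi ->
  exists x, forall m, lo m <= x <= hi m.
Proof.
move=> lo_le_hi lo_incr hi_decr.
have lo_le_hi' k m : lo k <= hi m.
  have [km|/ltnW mk] := leqP k m.
    exact: le_trans (lo_incr _ _ km) (lo_le_hi m).
  exact: le_trans (lo_le_hi k) (hi_decr _ _ mk).
have ub_lo : ubound (range lo) (hi 0) by move=> _ [k _ <-].
exists (sup (range lo)) => m; apply/andP; split.
  by apply: ub_le_sup; [exists (hi 0) | exists m].
by apply: ge_sup; [exists (lo 0), 0 | move=> _ [k _ <-]].
Qed.

Section Constants.
Variable R : realType.
Local Notation q := (@q3 R).
Local Notation M := (@Mc R).

Lemma q3_cube : q ^+ 3 = 9.
Proof.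
rewrite /q3 -powR_mulrn; last exact: powR_ge0.
rewrite -powRrM (_ : 2 / 3 * 3%:R = 2%:R); last by field.
by rewrite powR_mulrn // expr2; lra.
Qed.

Lemma q3_ge0 : 0 <= q. Proof. exact: powR_ge0. Qed.

Lemma q3_gt2 : 2 < q.
Proof.
rewrite ltNge; apply/negP => q_le2.
have : q ^+ 3 <= 2 ^+ 3 by rewrite lerXn2r // ?nnegrE ?q3_ge0.
by rewrite q3_cube !exprS expr0; lra.
Qed.

Lemma q3_gt0 : 0 < q. Proof. by have := q3_gt2; lra. Qed.

Lemma q3_le3 : q <= 3.
Proof.
rewrite leNgt; apply/negP => q_gt3.
have : 3 ^+ 3 < q ^+ 3 by rewrite ltrXn2r // ?nnegrE ?q3_ge0 //; lra.
by rewrite q3_cube !exprS expr0; lra.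
Qed.

Lemma sqrt_q3_mul_q3 : Num.sqrt q * q = 3.
Proof.
have sq_gt0 : 0 < Num.sqrt q * q by rewrite mulr_gt0 ?sqrtr_gt0 ?q3_gt0.
have : (Num.sqrt q * q) ^+ 2 = 3 ^+ 2.
  by rewrite exprMn sqr_sqrtr ?q3_ge0 // -exprS q3_cube expr2; lra.
by move/eqP; rewrite eqf_sqr => /orP[] /eqP; lra.
Qed.

Lemma Mc_gt0 : 0 < M.
Proof. by rewrite /Mc invr_gt0; have := q3_gt2; lra. Qed.

Lemma Jlen_gt0 n : 0 < Jlen R n.
Proof. by rewrite /Jlen invr_gt0 exprn_gt0 // q3_gt0. Qed.

Lemma Jlen_le1 n : Jlen R n <= 1.
Proof.
rewrite /Jlen invf_le1 ?exprn_gt0 ?q3_gt0 // exprn_ege1 //.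
by have := q3_gt2; lra.
Qed.

Lemma sqrt_Jlen_mul_Jlen n : Num.sqrt (Jlen R n) * Jlen R n = 3 ^- n.
Proof.
rewrite /Jlen sqrtrV ?exprn_ge0 ?q3_ge0 // sqrtrX ?q3_ge0 //.
by rewrite -invfM -exprMn sqrt_q3_mul_q3.
Qed.

End Constants.

Section Components.
Context {R : realType}.
Local Notation q := (@q3 R).
Local Notation M := (@Mc R).

Definition comp_len (m : nat) : R := M / q ^+ m.

Lemma comp_len_gt0 m : 0 < comp_len m.
Proof. by rewrite divr_gt0 ?Mc_gt0 // exprn_gt0 // q3_gt0. Qed.

(* This identity is where M = 1 / (q - 2) comes from. *)
Lemma comp_lenS m : comp_len m - Jlen R m.+1 = 2 * comp_len m.+1.
Proof.
have q_neq0 : q != 0 by rewrite gt_eqF ?q3_gt0.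
have q2_neq0 : q - 2 != 0 by rewrite subr_eq0 gt_eqF ?q3_gt2.
rewrite /comp_len /Jlen /Mc exprS; field.
by rewrite q2_neq0 q_neq0 expf_neq0.
Qed.

Lemma gap_len n (I : R * R) : (gap n I).2 - (gap n I).1 = Jlen R n.
Proof. by rewrite /gap /=; lra. Qed.

Lemma gap1_comp {m} {I : R * R} : I.2 - I.1 = comp_len m ->
  (gap m.+1 I).1 = I.1 + comp_len m.+1.
Proof. by rewrite /gap /=; have := comp_lenS m; lra. Qed.

Lemma gap2_comp {m} {I : R * R} : I.2 - I.1 = comp_len m ->
  (gap m.+1 I).2 = I.2 - comp_len m.+1.
Proof. by rewrite /gap /=; have := comp_lenS m; lra. Qed.

Lemma split_comp_sub {m} {I J : R * R} : I.2 - I.1 = comp_len m ->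
  J \in split_comp m.+1 I -> [/\ J.2 - J.1 = comp_len m.+1, I.1 <= J.1 & J.2 <= I.2].
Proof.
move=> I_len; have := comp_len_gt0 m.+1; have := comp_lenS m; have := Jlen_gt0 R m.+1.
rewrite !inE => ? ? ? /orP[] /eqP ->.
  by rewrite gap1_comp // /=; split; lra.
by rewrite gap2_comp // /=; split; lra.
Qed.

Lemma compsS m :
  comps R m.+1 = flatten [seq split_comp m.+1 ab | ab <- comps R m].
Proof. by []. Qed.

Lemma comps_bounds {m} {I : R * R} : I \in comps R m ->
  [/\ I.2 - I.1 = comp_len m, 0 <= I.1 & I.2 <= M].
Proof.
elim: m I => [|m IH] I.
  by rewrite inE => /eqP -> /=; rewrite /comp_len expr0 divr1; split; lra.
rewrite compsS => /flatten_mapP [K /IH [K_len K1 K2] IK].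
by have [] := split_comp_sub K_len IK; split; lra.
Qed.

Lemma comps_len {m} {I : R * R} : I \in comps R m -> I.2 - I.1 = comp_len m.
Proof. by case/comps_bounds. Qed.

Lemma split_comps {m} {K : R * R} : K \in comps R m ->
  (K.1, (gap m.+1 K).1) \in comps R m.+1 /\ ((gap m.+1 K).2, K.2) \in comps R m.+1.
Proof.
move=> K_comp; rewrite compsS; split; apply/flatten_mapP; exists K => //;
  by rewrite !inE eqxx ?orbT.
Qed.

Lemma gap_inside_comp {m} {K : R * R} : K \in comps R m ->
  K.1 < (gap m.+1 K).1 /\ (gap m.+1 K).2 < K.2.
Proof.
move/comps_len => K_len.
by rewrite gap1_comp // gap2_comp //; have := comp_len_gt0 m.+1; lra.
Qed.

Lemma comps_eq_or_apart {m} {I J : R * R} : I \in comps R m -> J \in comps R m ->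
  I = J \/ I.2 < J.1 \/ J.2 < I.1.
Proof.
elim: m I J => [|m IH] I J; first by rewrite !inE => /eqP -> /eqP ->; left.
rewrite compsS => /flatten_mapP [K K_comp IK] /flatten_mapP [K' K'_comp JK'].
have [_ IK1 IK2] := split_comp_sub (comps_len K_comp) IK.
have [_ JK1 JK2] := split_comp_sub (comps_len K'_comp) JK'.
have [eqK|[KK'|K'K]] := IH _ _ K_comp K'_comp; [subst K'|by right; left; lra|by right; right; lra].
have := gap_inside_comp K_comp; have := gap_len m.+1 K; have := Jlen_gt0 R m.+1.
move: IK JK'; rewrite !inE => /orP[]/eqP-> /orP[]/eqP-> /= *;
  by [left | right; left; lra | right; right; lra].
Qed.

Lemma comps_nested {m k} {I : R * R} : I \in comps R (m + k) ->
  exists2 K, K \in comps R m & K.1 <= I.1 /\ I.2 <= K.2.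
Proof.
elim: k I => [|k IH] I; first by rewrite addn0 => I_comp; exists I => //; lra.
rewrite addnS compsS => /flatten_mapP [K /[dup] /comps_len K_len /IH [K' K'_comp KK'] IK].
have [_ IK1 IK2] := split_comp_sub K_len IK.
by exists K' => //; lra.
Qed.

Lemma comps_avoid_gap {m} {K I : R * R} : K \in comps R m -> I \in comps R m.+1 ->
  I.2 <= (gap m.+1 K).1 \/ (gap m.+1 K).2 <= I.1.
Proof.
move=> K_comp; rewrite compsS => /flatten_mapP [K' K'_comp IK'].
have [_ IK1 IK2] := split_comp_sub (comps_len K'_comp) IK'.
have [eqK|[KK'|K'K]] := comps_eq_or_apart K_comp K'_comp; last 2 first.
- by have := gap_inside_comp K_comp; right; lra.
- by have := gap_inside_comp K_comp; left; lra.
subst K'; by move: IK'; rewrite !inE => /orP[]/eqP-> /=; [left|right].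
Qed.

Definition isgap (G : R * R) := exists n, (1 <= n)%N && (G \in gaps R n).

Lemma isgapP (G : R * R) :
  isgap G <-> exists m, exists2 K, K \in comps R m & G = gap m.+1 K.
Proof.
split; first by case=> -[|m] // /andP[_ /mapP [K K_comp ->]]; exists m, K.
by case=> m [K K_comp ->]; exists m.+1; apply: map_f.
Qed.

Lemma gap_uniq {G G' : R * R} {x : R} : isgap G -> isgap G' ->
  G.1 < x < G.2 -> G'.1 < x < G'.2 -> G = G'.
Proof.
move=> /isgapP [m [K K_comp ->]] /isgapP [m' [K' K'_comp ->]].
wlog le_mm' : m m' K K' K_comp K'_comp / (m <= m')%N.
  move=> W xG xG'; have [mm'|/ltnW m'm] := leqP m m'; first exact: W.
  by apply/esym/W.
move=> /andP[x1 x2] /andP[x1' x2'].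
have [KG1 KG2] := gap_inside_comp K_comp; have [K'G1 K'G2] := gap_inside_comp K'_comp.
move: le_mm'; rewrite leq_eqVlt => /orP[/eqP eqm|lt_mm'].
  subst m'; have [->//|[KK'|K'K]] := comps_eq_or_apart K_comp K'_comp; exfalso; lra.
have [I I_comp [I1 I2]] : exists2 I, I \in comps R m.+1 & I.1 <= K'.1 /\ K'.2 <= I.2.
  by apply: (@comps_nested m.+1 (m' - m.+1)); rewrite subnKC.
by exfalso; have [] := comps_avoid_gap K_comp I_comp; lra.
Qed.

Lemma gap_bounds {G : R * R} : isgap G -> 0 < G.1 /\ G.2 <= M.
Proof.
move=> /isgapP [m [K K_comp ->]].
by have [_ ? ?] := comps_bounds K_comp; have := gap_inside_comp K_comp; lra.
Qed.

Lemma isgap_len {G : R * R} : isgap G -> exists n, G.2 - G.1 = Jlen R n.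
Proof. by move=> /isgapP [m [K _ ->]]; exists m.+1; rewrite gap_len. Qed.

End Components.

Section Density.
Context {R : realType}.
Local Notation M := (@Mc R).
Local Notation g := (@gfun R).

Definition tent (G : R * R) (x : R) : R :=
  4 / Num.sqrt (G.2 - G.1) * Num.min (x - G.1) (G.2 - x).

Lemma gfun_gap {G : R * R} {x : R} : isgap G -> G.1 < x < G.2 -> g x = tent G x.
Proof.
move=> G_gap xG; rewrite /gfun; case: pselect => [A_x|notA].
  by case: A_x => _ []; case: G_gap => n /andP[n1 nG]; exists n => //; exists G.
set S := (X in xget 0 X).
have S_tent : S (tent G x).
  by case: G_gap => n /andP[n1 nG]; exists n, G; rewrite ?n1.
have [n [J /andP[n1 nJ] [xJ ->]]] := xgetPex 0 (ex_intro _ _ S_tent).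
suff -> : J = G by [].
by apply: gap_uniq xJ xG => //; exists n; rewrite n1.
Qed.

Lemma gfun_cases x : g x = 0 \/ exists2 G, isgap G & G.1 < x < G.2.
Proof.
rewrite /gfun; case: pselect => [A_x|notA]; first by left.
set S := (X in xget 0 X).
have [[v [n [J /andP[n1 nJ] [xJ _]]]]|noS] := pselect (exists v, S v).
  by right; exists J => //; exists n; rewrite n1.
by left; apply: xgetPN => v Sv; apply: noS; exists v.
Qed.

Lemma tent_ge0 {G : R * R} {x : R} : G.1 < x < G.2 -> 0 <= tent G x.
Proof.
move=> /andP[x1 x2]; rewrite mulr_ge0 ?divr_ge0 ?sqrtr_ge0 //.
by rewrite le_min; apply/andP; split; lra.
Qed.

Lemma tent_le {G : R * R} {x : R} : G.1 < x < G.2 -> tent G x <= 2 * Num.sqrt (G.2 - G.1).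
Proof.
move=> /andP[x1 x2]; set L := G.2 - G.1; have L_def : L = G.2 - G.1 by [].
have L_gt0 : 0 < L by lra.
have min_le : Num.min (x - G.1) (G.2 - x) <= L / 2.
  by rewrite ge_min; case: (lerP (x - G.1) (L / 2)) => //= ?; lra.
rewrite /tent -/L mulrAC ler_pdivrMr ?sqrtr_gt0 // -mulrA -expr2 sqr_sqrtr; lra.
Qed.

Lemma tent_hoelder {G : R * R} {x y : R} : G.1 < x < G.2 -> G.1 < y < G.2 ->
  `|tent G x - tent G y| <= 4 * Num.sqrt `|x - y|.
Proof.
move=> /andP[x1 x2] /andP[y1 y2]; set L := G.2 - G.1; have L_def : L = G.2 - G.1 by [].
have L_gt0 : 0 < L by lra.
have sqrtL_gt0 : 0 < Num.sqrt L by rewrite sqrtr_gt0.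
have xy_le : `|x - y| <= L by rewrite ler_norml; apply/andP; split; lra.
have div_le := ler_div_sqrt (normr_ge0 (x - y)) xy_le L_gt0.
have min_lip := dist_min_lipschitz G.1 G.2 x y.
rewrite /tent -mulrBr normrM ger0_norm ?divr_ge0 ?sqrtr_ge0 // -/L mulrAC -mulrA.
have : `|Num.min (x - G.1) (G.2 - x) - Num.min (y - G.1) (G.2 - y)| / Num.sqrt L
    <= `|x - y| / Num.sqrt L by rewrite ler_pM2r ?invr_gt0.
lra.
Qed.

Lemma tent_le_dist {G : R * R} {x y : R} : G.1 < x < G.2 -> y <= G.1 \/ G.2 <= y ->
  tent G x <= 4 * Num.sqrt `|x - y|.
Proof.
move=> /andP[x1 x2] yG; set L := G.2 - G.1; have L_def : L = G.2 - G.1 by [].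
set d := Num.min (x - G.1) (G.2 - x).
have d_ge0 : 0 <= d by rewrite le_min; apply/andP; split; lra.
have d_le : d <= `|x - y|.
  have := ler_norm (x - y); have := ler_norm (y - x); rewrite distrC => ? ?.
  by rewrite ge_min; apply/orP; case: yG => ?; [left|right]; lra.
have d_le_L : d <= L by rewrite ge_min; apply/orP; left; lra.
have L_gt0 : 0 < L by lra.
have div_le := ler_div_sqrt d_ge0 d_le_L L_gt0.
have sqrt_le : Num.sqrt d <= Num.sqrt `|x - y| by rewrite ler_sqrt.
by rewrite /tent -/L -/d mulrAC -mulrA; lra.
Qed.

Lemma gfun_ge0 x : 0 <= g x.
Proof.
have [->//|[G G_gap xG]] := gfun_cases x.
by rewrite (gfun_gap G_gap xG) tent_ge0.
Qed.

Lemma gfun_le2 x : g x <= 2.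
Proof.
have [->|[G G_gap xG]] := gfun_cases x; first lra.
rewrite (gfun_gap G_gap xG); apply: le_trans (tent_le xG) _.
have [n ->] := isgap_len G_gap.
have : Num.sqrt (Jlen R n) <= 1 by rewrite -sqrtr1 ler_sqrt ?Jlen_le1.
lra.
Qed.

Lemma gfun_out x : x <= 0 \/ M < x -> g x = 0.
Proof.
have [//|[G G_gap /andP[x1 x2]]] := gfun_cases x.
by have [] := gap_bounds G_gap; lra.
Qed.

Lemma gfun_le_dist_or_same_gap x y :
  (exists G, [/\ isgap G, G.1 < x < G.2 & G.1 < y < G.2])
  \/ g x <= 4 * Num.sqrt `|x - y|.
Proof.
have [->|[G G_gap xG]] := gfun_cases x; first by right; rewrite mulr_ge0 ?sqrtr_ge0.
have [yG|yG] := boolP (G.1 < y < G.2); first by left; exists G.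
right; rewrite (gfun_gap G_gap xG); apply: tent_le_dist => //.
by move: yG; rewrite negb_and -!leNgt => /orP[]; [left|right].
Qed.

Lemma gfun_hoelder x y : `|g x - g y| <= 8 * Num.sqrt `|x - y|.
Proof.
have := sqrtr_ge0 `|x - y|.
have [[G [G_gap xG yG]]|gx_le] := gfun_le_dist_or_same_gap x y.
  by rewrite (gfun_gap G_gap xG) (gfun_gap G_gap yG); have := tent_hoelder xG yG; lra.
have [[G [G_gap yG xG]]|gy_le] := gfun_le_dist_or_same_gap y x.
  by rewrite (gfun_gap G_gap xG) (gfun_gap G_gap yG); have := tent_hoelder xG yG; lra.
rewrite distrC in gy_le; have := gfun_ge0 x; have := gfun_ge0 y.
by rewrite ler_norml => *; apply/andP; split; lra.
Qed.

Lemma gfun_cont : continuous g.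
Proof.
move=> x; apply/cvgrPdist_le => e e_gt0; apply/nbhs_ballP.
exists ((e / 8) ^+ 2); first by rewrite /= exprn_gt0 // divr_gt0.
move=> y; rewrite /ball /= => xy_lt; apply: le_trans (gfun_hoelder x y) _.
have : Num.sqrt `|x - y| <= Num.sqrt ((e / 8) ^+ 2).
  by rewrite ler_sqrt ?sqr_ge0 // ltW.
by rewrite sqrtr_sqr (@ger0_norm _ (e / 8)); lra.
Qed.

End Density.

Section Primitive.
Context {R : realType}.
Local Notation g := (@gfun R).
Local Notation f := (@ffun R).
Local Notation mu := (@lebesgue_measure R).

Lemma gfun_integrable (a b : R) : mu.-integrable `[a, b] (EFin \o g).
Proof.
apply: continuous_compact_integrable; first exact: segment_compact.
exact: continuous_subspaceT gfun_cont.
Qed.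

Lemma ffun_at0 : f 0 = 0.
Proof. by rewrite /ffun set_itv1 Rintegral_set1. Qed.

Lemma ffun_lt0 y : y < 0 -> f y = 0.
Proof. by move=> y_lt0; rewrite /ffun set_itv_ge ?Rintegral_set0 // bnd_simp -ltNge. Qed.

Lemma Rintegral_gfun_le0 (a b : R) : b <= 0 -> \int[mu]_(t in `[a, b]) g t = 0.
Proof.
move=> b_le0; transitivity (\int[mu]_(t in `[a, b]) (0 : R)).
  apply: eq_Rintegral => t; rewrite inE /= in_itv /= => /andP[_ tb].
  by rewrite gfun_out //; left; lra.
by rewrite /Rintegral integral0.
Qed.

(* FTC1 needs the point strictly inside the domain of integration; since g
   vanishes on [-1, 0], the integral may start at -1 instead of 0. *)
Lemma ffun_from_m1 y : -1 <= y -> f y = \int[mu]_(t in `[-1, y]) g t.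
Proof.
move=> y_ge; have [y_lt0|y_ge0] := ltP y 0.
  by rewrite ffun_lt0 // Rintegral_gfun_le0 //; lra.
have m1_le0 : (BLeft (-1) <= BRight (0 : R))%O by rewrite bnd_simp; lra.
have le0y : (BRight 0 <= BRight y)%O by rewrite bnd_simp.
have := Rintegral_itvB (gfun_integrable (-1) y) m1_le0 le0y.
rewrite [X in _ - X]Rintegral_gfun_le0 // subr0 => ->.
rewrite /ffun Rintegral_itv_obnd_cbnd //.
by apply: integrableS (gfun_integrable 0 y) => //; apply: subset_itvr; rewrite bnd_simp.
Qed.

Lemma is_derive_ffun (x : R) : is_derive x 1 f (g x).
Proof.
have [x_lt0|x_ge0] := ltP x 0.
  rewrite gfun_out; last by left; lra.
  apply: (@near_eq_is_derive R R^o R^o (cst 0) f x 1 0).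
  by near=> y; rewrite ffun_lt0 //; near: y; apply: lt_nbhsl.
have m1_lt_x : (BLeft (-1)%R < BRight x)%E by rewrite /= lte_fin; lra.
have [F_derivable F'] := continuous_FTC1 (ltr_pwDr ltr01 (lexx x))
  (gfun_integrable (-1) (x + 1)) m1_lt_x (gfun_cont x).
apply: (@near_eq_is_derive R R^o R^o (fun y => \int[mu]_(t in `[-1, y]) g t) f x 1 (g x)).
  near=> y; rewrite ffun_from_m1 //.
  by near: y; apply: (filterS (fun y => @ltW _ _ _ y)); apply: lt_nbhsr; lra.
by apply: DeriveDef; rewrite // -derive1E.
Unshelve. all: by end_near.
Qed.

Lemma ffun_cont : continuous f.
Proof.
move=> x; apply: differentiable_continuous; apply/derivable1_diffP.
by have [] := is_derive_ffun x.
Qed.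

End Primitive.

Section Increments.
Context {R : realType}.
Local Notation g := (@gfun R).
Local Notation f := (@ffun R).

Lemma ffun_incr_bounds {a b : R} : a <= b -> 0 <= f b - f a <= 2 * (b - a).
Proof.
move=> ab; have [c _ ->] := @MVT_segment R f g a b ab (fun x _ => is_derive_ffun x)
  (continuous_subspaceT ffun_cont).
have [gc_ge0 gc_le2] := (gfun_ge0 c, gfun_le2 c).
by rewrite mulr_ge0 ?subr_ge0 //= -subr_ge0 -mulrBl mulr_ge0 // subr_ge0.
Qed.

Lemma ffun_incr_linear_gfun (u v c k : R) : u <= v ->
  (forall x, x \in `]u, v[ -> g x = k * (2 * (x - c))) ->
  f v - f u = k * (v - c) ^+ 2 - k * (u - c) ^+ 2.
Proof.
move=> uv g_lin.
apply: (same_derive_same_incr _ (fun y => k * (y - c) ^+ 2) (fun x => k * (2 * (x - c)))) => //.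
- by move=> x /g_lin <-; apply: is_derive_ffun.
- by move=> x _; apply: is_derive_scaled_square.
- exact: ffun_cont.
move=> x; apply: differentiable_continuous; apply/derivable1_diffP.
by have [] := is_derive_scaled_square k c x.
Qed.

Lemma ffun_gap_incr {G : R * R} : isgap G ->
  f G.2 - f G.1 = Num.sqrt (G.2 - G.1) * (G.2 - G.1).
Proof.
move=> G_gap; have [n G_len] := isgap_len G_gap.
set L := G.2 - G.1 in G_len *; set s := Num.sqrt L; set m := (G.1 + G.2) / 2.
have L_def : L = G.2 - G.1 by []; have m_def : m = (G.1 + G.2) / 2 by [].
have L_gt0 : 0 < L by rewrite G_len Jlen_gt0.
have s_gt0 : 0 < s by rewrite sqrtr_gt0.
have ssL : s * s = L by rewrite -expr2 sqr_sqrtr // ltW.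
have left_half : f m - f G.1 = 2 / s * (m - G.1) ^+ 2 - 2 / s * (G.1 - G.1) ^+ 2.
  apply: ffun_incr_linear_gfun => [|x]; first lra.
  rewrite in_itv /= => /andP[x1 x2]; have xG : G.1 < x < G.2 by lra.
  by rewrite (gfun_gap G_gap xG) /tent min_l -/L -/s; [field; lra | lra].
have right_half : f G.2 - f m = - (2 / s) * (G.2 - G.2) ^+ 2 - - (2 / s) * (m - G.2) ^+ 2.
  apply: ffun_incr_linear_gfun => [|x]; first lra.
  rewrite in_itv /= => /andP[x1 x2]; have xG : G.1 < x < G.2 by lra.
  by rewrite (gfun_gap G_gap xG) /tent min_r -/L -/s; [field; lra | lra].
have -> : f G.2 - f G.1 = (f m - f G.1) + (f G.2 - f m) by ring.
have G2_def : G.2 = G.1 + s * s by lra.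
by rewrite left_half right_half m_def -ssL G2_def; field; lra.
Qed.

Lemma ffun_gap_comp_incr {m} {K : R * R} : K \in comps R m ->
  f (gap m.+1 K).2 - f (gap m.+1 K).1 = 3 ^- m.+1.
Proof.
move=> K_comp; have G_gap : isgap (gap m.+1 K) by apply/isgapP; exists m, K.
by rewrite (ffun_gap_incr G_gap) gap_len sqrt_Jlen_mul_Jlen.
Qed.

End Increments.

Section ComponentIncrements.
Context {R : realType}.
Local Notation q := (@q3 R).
Local Notation M := (@Mc R).
Local Notation f := (@ffun R).

Definition incr (I : R * R) : R := f I.2 - f I.1.

Lemma exp3VS m : (3 : R) ^- m = 3 * 3 ^- m.+1.
Proof. by rewrite exprS invfM mulrA mulfV ?mul1r // pnatr_eq0. Qed.

(* The middle gap contributes 3^-(m+1) = 3^-m - 2 3^-(m+1). *)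
Lemma incr_comp_err_split {m} {K : R * R} : K \in comps R m ->
  incr K - 3 ^- m = (incr (K.1, (gap m.+1 K).1) - 3 ^- m.+1)
                  + (incr ((gap m.+1 K).2, K.2) - 3 ^- m.+1).
Proof.
by move/ffun_gap_comp_incr; rewrite (exp3VS m) /incr /=; lra.
Qed.

Lemma incr_comp_err_le k {m} {K : R * R} : K \in comps R m ->
  `|incr K - 3 ^- m| <= 2 ^+ k * (2 * comp_len (m + k) + 3 ^- (m + k)).
Proof.
elim: k m K => [|k IH] m K K_comp.
  have K_len := comps_len K_comp; have len_gt0 := @comp_len_gt0 R m.
  have K12 : K.1 <= K.2 by lra.
  have /andP[incr_ge0] := ffun_incr_bounds K12; rewrite K_len => incr_le.
  have : 0 < (3 : R) ^- m by rewrite invr_gt0 exprn_gt0.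
  by rewrite addn0 expr0 mul1r /incr ler_norml => ?; apply/andP; split; lra.
have [c1 c2] := split_comps K_comp.
have := IH _ _ c1; have := IH _ _ c2; rewrite !addSnnS => err1 err2.
rewrite (incr_comp_err_split K_comp) [2 ^+ k.+1]exprS -mulrA.
by apply: le_trans (ler_normD _ _) _; lra.
Qed.

Lemma incr_comp_err_le_geometric k {m} {K : R * R} : K \in comps R m ->
  `|incr K - 3 ^- m| <= (2 * M + 1) * (2 / q) ^+ k.
Proof.
move=> K_comp; apply: le_trans (incr_comp_err_le k K_comp) _.
have q_gt0 := q3_gt0 R; have qk_gt0 : 0 < q ^+ k by rewrite exprn_gt0.
have len_le : comp_len (m + k) <= M / q ^+ k.
  rewrite ler_pM2l ?Mc_gt0 // lef_pV2 ?posrE ?exprn_gt0 //.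
  by apply: ler_weXn2l (leq_addl _ _); have := q3_gt2 R; lra.
have exp3_le : (3 : R) ^- (m + k) <= (q ^+ k)^-1.
  rewrite lef_pV2 ?posrE ?exprn_gt0 //; apply: (@le_trans _ _ (3 ^+ k)).
    by rewrite lerXn2r ?nnegrE ?q3_le3 // ltW.
  by apply: ler_weXn2l (leq_addl _ _); lra.
have -> : (2 * M + 1) * (2 / q) ^+ k = 2 ^+ k * (2 * (M / q ^+ k) + (q ^+ k)^-1).
  by rewrite exprMn exprVn; field; rewrite gt_eqF.
by rewrite ler_pM2l ?exprn_gt0 //; lra.
Qed.

Lemma ffun_comp_incr {m} {K : R * R} : K \in comps R m -> incr K = 3 ^- m.
Proof.
move=> K_comp; apply/eqP; rewrite -subr_eq0; apply/eqP.
apply: (@eq0_norm_le_geometric _ _ (2 * M + 1) (2 / q)).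
  have q_gt2 := q3_gt2 R; apply/andP; split; first by rewrite divr_ge0 //; lra.
  by rewrite ltr_pdivrMr; lra.
by move=> k; apply: incr_comp_err_le_geometric.
Qed.

Lemma ffun_Mc : f M = 1.
Proof.
have := @ffun_comp_incr 0 (0, M); rewrite /incr /= ffun_at0 subr0 expr0 invr1.
by apply; rewrite inE.
Qed.

Lemma ffun_range x : 0 <= x <= M -> 0 <= f x <= 1.
Proof.
move=> /andP[x_ge0 x_le]; have := ffun_incr_bounds x_ge0; have := ffun_incr_bounds x_le.
by rewrite ffun_at0 ffun_Mc => /andP[? _] /andP[? _]; apply/andP; split; lra.
Qed.

End ComponentIncrements.

Section TwoVariables.
Context {R : realType}.
Local Notation g := (@gfun R).
Local Notation f := (@ffun R).
Local Notation F := (@FF R).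

Lemma FF_sum : F = (f \o fst) + (f \o snd).
Proof. by apply/funext. Qed.

Lemma ffun_differentiable (x : R) : differentiable f x.
Proof. by apply/derivable1_diffP; have [] := is_derive_ffun x. Qed.

Lemma fst_differentiable (p : R * R) : differentiable fst p.
Proof. by apply: linear_differentiable => x; apply: cvg_fst. Qed.

Lemma snd_differentiable (p : R * R) : differentiable snd p.
Proof. by apply: linear_differentiable => x; apply: cvg_snd. Qed.

Lemma FF_differentiable (p : R * R) : differentiable F p.
Proof.
rewrite FF_sum; apply: differentiableD; apply: differentiable_comp.
- exact: fst_differentiable.
- exact: ffun_differentiable.
- exact: snd_differentiable.
- exact: ffun_differentiable.
Qed.

Lemma derive_FF (p v : R * R) : 'D_v F p = 'D_(v.1) f p.1 + 'D_(v.2) f p.2.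
Proof.
have dfst : differentiable (f \o fst) p.
  exact: differentiable_comp (fst_differentiable p) (ffun_differentiable _).
have dsnd : differentiable (f \o snd) p.
  exact: differentiable_comp (snd_differentiable p) (ffun_differentiable _).
by rewrite FF_sum deriveD //; apply: diff_derivable.
Qed.

Lemma derive_ffun (x : R) : 'D_1 f x = g x.
Proof. by have [_ ->] := is_derive_ffun x. Qed.

Lemma derive10_FF (p : R * R) : 'D_((1, 0) : R * R) F p = g p.1.
Proof. by rewrite derive_FF /= derive0 derive_ffun addr0. Qed.

Lemma derive01_FF (p : R * R) : 'D_((0, 1) : R * R) F p = g p.2.
Proof. by rewrite derive_FF /= derive0 derive_ffun add0r. Qed.

Lemma derive_FF_hoelder (p p' v : R * R) : v = (1, 0) \/ v = (0, 1) ->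
  `|'D_v F p - 'D_v F p'| <= 8 * (`|p - p'| `^ (1 / 2)).
Proof.
rewrite div1r powR12_sqrt // prod_normE.
case=> ->; rewrite ?derive10_FF ?derive01_FF; apply: le_trans (gfun_hoelder _ _) _;
  by rewrite ler_pM2l // ler_sqrt // le_max lexx ?orbT.
Qed.

End TwoVariables.

Section CriticalValues.
Context {R : realType}.
Local Notation M := (@Mc R).
Local Notation g := (@gfun R).
Local Notation f := (@ffun R).

Lemma gfun_eq0_in_all_levels x :
  (forall m, exists2 I, I \in comps R m & I.1 <= x <= I.2) -> g x = 0.
Proof.
move=> x_in; have [//|[G /isgapP [m [K K_comp ->]] /andP[x1 x2]]] := gfun_cases x.
have [I I_comp /andP[I1 I2]] := x_in m.+1.
by have [] := comps_avoid_gap K_comp I_comp; lra.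
Qed.

Lemma ffun_gap_ends {m} {I : R * R} : I \in comps R m ->
  f (gap m.+1 I).1 = f I.1 + 3 ^- m.+1 /\ f (gap m.+1 I).2 = f I.1 + 2 * 3 ^- m.+1.
Proof.
move=> I_comp; have [c1 c2] := split_comps I_comp.
have := ffun_comp_incr I_comp; have := ffun_comp_incr c1; have := ffun_gap_comp_incr I_comp.
by rewrite /incr (exp3VS m) /=; split; lra.
Qed.

Variable t : R.

Definition brackets m (IJ : (R * R) * (R * R)) : Prop :=
  [/\ IJ.1 \in comps R m, IJ.2 \in comps R m &
      f IJ.1.1 + f IJ.2.1 <= t <= f IJ.1.1 + f IJ.2.1 + 2 * 3 ^- m].

Definition subseg (I' I : R * R) := I.1 <= I'.1 /\ I'.2 <= I.2.

Definition refines m (IJ IJ' : (R * R) * (R * R)) :=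
  brackets m.+1 IJ' /\ subseg IJ'.1 IJ.1 /\ subseg IJ'.2 IJ.2.

(* The left ends of the children of I have f-values f I.1 and
   f I.1 + 2 3^-(m+1), so the three pairs below cover the window of t. *)
Lemma brackets_refine m IJ : brackets m IJ -> exists IJ', refines m IJ IJ'.
Proof.
case: IJ => I J [/= I_comp J_comp /andP[t_ge t_le]].
have [[cI1 cI2] [cJ1 cJ2]] := (split_comps I_comp, split_comps J_comp).
have [[fI1 fI2] [fJ1 fJ2]] := (ffun_gap_ends I_comp, ffun_gap_ends J_comp).
have [[gI1 gI2] [gJ1 gJ2]] := (gap_inside_comp I_comp, gap_inside_comp J_comp).
have [lenI lenJ] := (gap_len m.+1 I, gap_len m.+1 J); have Jlen_pos := Jlen_gt0 R m.+1.
rewrite (exp3VS m) in t_le.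
have [t1|t1] := lerP t (f I.1 + f J.1 + 2 * 3 ^- m.+1).
  exists ((I.1, (gap m.+1 I).1), (J.1, (gap m.+1 J).1)).
  by split; [split => //=; apply/andP; split; lra | do 2?split => /=; lra].
have [t2|t2] := lerP t (f I.1 + f J.1 + 4 * 3 ^- m.+1).
  exists (((gap m.+1 I).2, I.2), (J.1, (gap m.+1 J).1)).
  by split; [split => //=; apply/andP; split; lra | do 2?split => /=; lra].
exists (((gap m.+1 I).2, I.2), ((gap m.+1 J).2, J.2)).
by split; [split => //=; apply/andP; split; lra | do 2?split => /=; lra].
Qed.

Fixpoint bracket_seq (m : nat) : (R * R) * (R * R) :=
  if m is m'.+1 then xget (bracket_seq m') (refines m' (bracket_seq m')) else ((0, M), (0, M)).

Lemma bracket_seqP : 0 <= t <= 2 ->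
  forall m, brackets m (bracket_seq m) /\ refines m (bracket_seq m) (bracket_seq m.+1).
Proof.
move=> /andP[t_ge0 t_le2].
have refine m : brackets m (bracket_seq m) -> refines m (bracket_seq m) (bracket_seq m.+1).
  by move/brackets_refine => ex_refine; apply: (xgetPex _ ex_refine).
have base : brackets 0 (bracket_seq 0).
  by split; rewrite /= ?inE // ffun_at0 expr0 invr1; apply/andP; split; lra.
elim=> [|m [_ [bm1 _]]]; first by split; last exact: refine.
by split; last exact: refine.
Qed.

Lemma critical_pair : 0 <= t <= 2 ->
  exists x y, [/\ 0 <= x <= M, 0 <= y <= M, f x + f y = t, g x = 0 & g y = 0].
Proof.
move=> t_range; have seqP := bracket_seqP t_range.
pose I m := (bracket_seq m).1; pose J m := (bracket_seq m).2.
have [x x_in] : exists x, forall m, (I m).1 <= x <= (I m).2.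
  apply: nested_segments_meet.
  - by move=> m; have [[/comps_len + _ _] _] := seqP m; have := @comp_len_gt0 R m; lra.
  - by apply/nondecreasing_seqP => m; have [_ [_ [[]]]] := seqP m.
  - by apply/nonincreasing_seqP => m; have [_ [_ [[]]]] := seqP m.
have [y y_in] : exists y, forall m, (J m).1 <= y <= (J m).2.
  apply: nested_segments_meet.
  - by move=> m; have [[_ /comps_len + _] _] := seqP m; have := @comp_len_gt0 R m; lra.
  - by apply/nondecreasing_seqP => m; have [_ [_ [_ []]]] := seqP m.
  - by apply/nonincreasing_seqP => m; have [_ [_ [_ []]]] := seqP m.
exists x, y; split; [exact: x_in 0 | exact: y_in 0 | | |].
- apply/eqP; rewrite -subr_eq0; apply/eqP.
  apply: (@eq0_norm_le_geometric _ _ 2 (3^-1)); first by rewrite invr_ge0 invf_lt1 //; lra.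
  move=> m; have [[I_comp J_comp /andP[t1 t2]] _] := seqP m.
  have /andP[x1 x2] := x_in m; have /andP[y1 y2] := y_in m.
  have [/andP[fx1 _] /andP[fx2 _]] := (ffun_incr_bounds x1, ffun_incr_bounds x2).
  have [/andP[fy1 _] /andP[fy2 _]] := (ffun_incr_bounds y1, ffun_incr_bounds y2).
  have := ffun_comp_incr I_comp; have := ffun_comp_incr J_comp; rewrite /incr => fJ fI.
  by rewrite -exprVn in t2 fI fJ; rewrite ler_norml; apply/andP; split; lra.
- by apply: gfun_eq0_in_all_levels => m; exists (I m); [have [[]] := seqP m | exact: x_in].
- by apply: gfun_eq0_in_all_levels => m; exists (J m); [have [[]] := seqP m | exact: y_in].
Qed.

End CriticalValues.

Theorem mainTheorem3 (R : realType) :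
  (forall p, @square R p -> 0 <= @FF R p <= 2) /\
  C1half (@square R) (@FF R) /\
  (forall t : R, 0 <= t <= 2 ->
     exists p, @square R p /\ @FF R p = t /\
       'D_(1, 0) (@FF R) p = 0 /\ 'D_(0, 1) (@FF R) p = 0).
Proof.
split.
  move=> p [/ffun_range /andP[x_ge0 x_le1] /ffun_range /andP[y_ge0 y_le1]].
  by rewrite /FF; apply/andP; split; lra.
split.
  split=> [p _|]; first exact: FF_differentiable.
  by exists 8 => p p' _ _; apply: derive_FF_hoelder.
move=> t /critical_pair [x [y [x_in y_in fxy gx0 gy0]]].
exists (x, y); do 2?split => //.
by rewrite derive10_FF derive01_FF gx0 gy0.
Qed.
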